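(* Let $\mathcal F=\{F_1,\dots,F_k\}$, $\mathcal I=\{0,1\}^k\setminus\{\boldsymbol 0\}$, $\mathcal I_0=\{0,1\}^k$, $I=2^k-1$, let $\mathcal F_{asc}$ be an ascending class of subsets of $\mathcal F$, $\mathcal F_{des}=2^{\mathcal F}\setminus\mathcal F_{asc}\setminus\{\varnothing\}$, and let $\mathbf A$ be the design matrix of the HAS model generated by $\mathcal F_{asc}$ (rows indexed by $W\in\mathcal F_{des}$, columns by $\boldsymbol i\in\mathcal I$, entry $1$ iff $W\subseteq\phi(\boldsymbol i)$). Let $\mathcal X_{\mathbf A}$ be the associated variety and $\overline{\mathcal X}_{\mathbf A}$ its projective closure, with the extra homogenizing coordinate $p_0$ corresponding to the zero cell $\boldsymbol 0$. Then the intersection of $\overline{\mathcal X}_{\mathbf A}$ with the interior of the $I$-dimensional simplex $\mathrm{int}(\Delta_I)$ is homeomorphic to the hierarchical log-linear model $LL(\mathcal F_{asc})$ on $\mathcal I_0$.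
   Context: $\phi(\boldsymbol i)$ is the set of features whose coordinate in $\boldsymbol i$ equals $1$. $\mathcal X_{\mathbf A}=\{\boldsymbol p\in\mathbb R^{I}_{\ge0}:\ \boldsymbol p^{\boldsymbol d^+}=\boldsymbol p^{\boldsymbol d^-}\ \text{for all integer }\boldsymbol d\in\mathrm{Ker}(\mathbf A)\}$, where $\boldsymbol d^\pm$ are the positive and negative parts of $\boldsymbol d$ and powers are componentwise monomials. The projective closure $\overline{\mathcal X}_{\mathbf A}$ is the smallest projective variety in projective space with homogeneous coordinates $(p_0:p(\boldsymbol i))_{\boldsymbol i\in\mathcal I}$ whose dehomogenization at $p_0=1$ is $\mathcal X_{\mathbf A}$ (obtained by homogenizing, with $p_0$, the polynomials of a Gröbner basis of the ideal of $\mathcal X_{\mathbf A}$). Its intersection with $\mathrm{int}(\Delta_I)$ means the set of strictly positive vectors $(p_0,(p(\boldsymbol i))_{\boldsymbol i\in\mathcal I})$ with coordinates summing to $1$ lying in (the cone of) $\overline{\mathcal X}_{\mathbf A}$. $LL(\mathcal F_{asc})$ is the set of strictly positive probability distributions $\boldsymbol p$ on $\mathcal I_0$ such that, writing $\log p(\boldsymbol i)=\sum_{V\subseteq\phi(\boldsymbol i)}\beta_V$ ($V$ over all subsets of $\mathcal F$, including $\varnothing$; a unique representation), $\beta_V=0$ for all $V\in\mathcal F_{asc}$. *)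

From HB Require Import structures.
From mathcomp Require Import all_boot all_order all_algebra.
From mathcomp Require Import all_classical all_reals all_analysis.
From mathcomp Require mpoly.
Set Implicit Arguments. Unset Strict Implicit. Unset Printing Implicit Defensive.
Import Order.TTheory GRing.Theory Num.Theory.
Local Open Scope ring_scope.

(* Features F = {F_1,...,F_k} are indexed by 'I_k. *)
Definition cell (k : nat) := {ffun 'I_k -> bool}.

Definition cell0 (k : nat) : cell k := [ffun => false].

Definition phi (k : nat) (i : cell k) : {set 'I_k} := [set j | i j].

Definition ascending (k : nat) (Fasc : {set {set 'I_k}}) : Prop :=
  forall V W : {set 'I_k}, V \in Fasc -> V \subset W -> W \in Fasc.

Definition Fdes (k : nat) (Fasc : {set {set 'I_k}}) : {set {set 'I_k}} :=
  [set W | (W \notin Fasc) && (W != finset.set0)].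

Definition designA (k : nat) (W : {set 'I_k}) (i : cell k) : int :=
  (W \subset phi i)%:R.

(* integer vectors d in Ker(A); d is indexed by I (coordinate at the zero cell
   is forced to be 0, i.e. d is a vector of Z^I) *)
Definition in_kerA (k : nat) (Fasc : {set {set 'I_k}}) (d : {ffun cell k -> int}) : Prop :=
  d (cell0 k) = 0 /\
  forall W, W \in Fdes Fasc ->
    \sum_(i : cell k | i != cell0 k) designA W i * d i = 0.

Definition dplus (z : int) : nat := absz (Num.max z 0).
Definition dminus (z : int) : nat := absz (Num.max (- z) 0).

(* X_A, as a set of vectors of R^I_{>=0}; a point p of R^I is encoded as a
   function on all cells whose coordinate at the zero cell is ignored. *)
Definition XA (R : realType) (k : nat) (Fasc : {set {set 'I_k}})
  (p : {ffun cell k -> R}) : Prop :=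
  (forall i, i != cell0 k -> 0 <= p i) /\
  forall d, in_kerA Fasc d ->
    \prod_(i : cell k | i != cell0 k) p i ^+ dplus (d i) =
    \prod_(i : cell k | i != cell0 k) p i ^+ dminus (d i).

(* Homogeneous coordinates (p_0 : p(i))_{i in I} of the ambient projective space
   are indexed by all cells (p_0 is the coordinate of the zero cell). *)
Definition hpoly (R : realType) (k : nat) := mpoly.mpoly #|{: cell k}| R.

Definition evalc (R : realType) (k : nat) (g : hpoly R k) (x : {ffun cell k -> R}) : R :=
  mpoly.meval (fun j : 'I_#|{: cell k}| => x (enum_val j)) g.

Definition homogeneous (R : realType) (k : nat) (g : hpoly R k) : Prop :=
  exists n : nat, forall m, mpoly.mcoeff m g != 0 -> mpoly.mdeg m = n.

(* (the cone over) the projective closure of X_A: the smallest projective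
   variety containing X_A embedded in the chart p_0 = 1, i.e. the common zero
   set of all homogeneous polynomials vanishing on {(1, q) : q in X_A}. *)
Definition in_proj_closure (R : realType) (k : nat) (Fasc : {set {set 'I_k}})
  (x : {ffun cell k -> R}) : Prop :=
  forall g : hpoly R k, homogeneous g ->
    (forall q : {ffun cell k -> R}, q (cell0 k) = 1 -> XA Fasc q -> evalc g q = 0) ->
    evalc g x = 0.

Definition int_simplex (R : realType) (k : nat) (x : {ffun cell k -> R}) : Prop :=
  (forall i, 0 < x i) /\ \sum_i x i = 1.

Definition closure_int_simplex (R : realType) (k : nat) (Fasc : {set {set 'I_k}})
  (x : {ffun cell k -> R}) : Prop :=
  in_proj_closure Fasc x /\ int_simplex x.

Definition LL (R : realType) (k : nat) (Fasc : {set {set 'I_k}})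
  (p : {ffun cell k -> R}) : Prop :=
  int_simplex p /\
  exists beta : {set 'I_k} -> R,
    (forall i : cell k, ln (p i) = \sum_(V : {set 'I_k} | V \subset phi i) beta V) /\
    (forall V, V \in Fasc -> beta V = 0).

(* continuity of a map on a subset of R^C (Euclidean topology; coordinatewise
   epsilon-delta, equivalent to the sup-norm) *)
Definition continuous_on (R : realType) (C D : finType) (A : {ffun C -> R} -> Prop)
  (f : {ffun C -> R} -> {ffun D -> R}) : Prop :=
  forall x, A x -> forall e : R, 0 < e -> exists2 dl : R, 0 < dl &
    forall y, A y -> (forall c, `|x c - y c| < dl) -> forall c', `|f x c' - f y c'| < e.

Definition homeomorphic (R : realType) (C D : finType)
  (A : {ffun C -> R} -> Prop) (B : {ffun D -> R} -> Prop) : Prop :=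
  exists (f : {ffun C -> R} -> {ffun D -> R}) (g : {ffun D -> R} -> {ffun C -> R}),
    (forall x, A x -> B (f x)) /\
    (forall y, B y -> A (g y)) /\
    (forall x, A x -> g (f x) = x) /\
    (forall y, B y -> f (g y) = y) /\
    continuous_on A f /\ continuous_on B g.

(* The two sets coincide, so the identity map is the homeomorphism.

   For positive x, membership in the projective closure is decided in the chart
   p_0 = 1: a homogeneous g of degree n satisfies g(x) = x_0^n g(x / x_0), and the
   binomials p^(d+) - p^(d-), homogenized by a power of p_0, vanish on the closure.
   Hence x is in the closure iff x / x_0 is in X_A, i.e., after taking logarithms,
   iff ln (x / x_0) is orthogonal to every integer vector of Ker A.

   Moebius inversion on the Boolean lattice writes ln x(i) as a sum of beta_V over
   V included in phi(i).  If beta vanishes on F_asc, ln (x / x_0) is a combination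
   of the rows of A, hence orthogonal to Ker A.  Conversely, for V in F_asc the row
   U |-> mu(U, V) (U nonempty) lies in Ker A, because its pairing with the row W of
   A is a signed sum over the interval [W, V] and W <> V; pairing it with
   ln (x / x_0) gives beta_V = 0. *)

From HB Require Import structures.
From mathcomp Require Import all_boot all_order all_algebra.
From mathcomp Require Import all_classical all_reals all_analysis.
From mathcomp Require mpoly.
Import -(notations) mpoly.
From mathcomp Require Import zify.
Set Implicit Arguments. Unset Strict Implicit. Unset Printing Implicit Defensive.
Import Order.TTheory GRing.Theory Num.Theory.
Local Open Scope ring_scope.

Lemma sum_sign_interval (R : pzRingType) (T : finType) (A B : {set T}) :
  \sum_(V : {set T} | (A \subset V) && (V \subset B)) (-1) ^+ #|V| =
  (A == B)%:R * (-1) ^+ #|A| :> R.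
Proof.
have [AB|nAB] := boolP (A \subset B); last first.
  rewrite big_pred0 => [|V]; last first.
    by apply/negbTE; apply: contra nAB => /andP[AV VB]; exact: fintype.subset_trans AV VB.
  by case: eqP nAB => [->|_ _]; rewrite ?subxx // mul0r.
have [<-|neqAB] := eqVneq A B.
  by rewrite (big_pred1 A) ?mul1r // => V; rewrite /= eq_sym finset.eqEsubset andbC.
have /fintype.properP[_ [x xB xA]] : A \proper B by rewrite finset.properEneq neqAB.
rewrite mul0r (bigID (fun V : {set T} => x \in V)) /=.
rewrite (reindex_onto (fun V : {set T} => x |: V) (fun V : {set T} => V :\ x)) /=; last first.
  by move=> V /andP[_ xV]; rewrite finset.setD1K.
rewrite (eq_bigl (fun V : {set T} => (A \subset V) && (V \subset B) && (x \notin V))).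
  rewrite -big_split big1 //= => V /andP[_ xV].
  by rewrite cardsU1 xV exprS mulN1r addNr.
move=> V; rewrite finset.setU11 andbT finset.subUset finset.sub1set xB /=.
have [xV|xV] := boolP (x \in V); rewrite ?andbF ?andbT.
  apply/negbTE/negP => /andP[_ /eqP/finset.setP/(_ x)].
  by rewrite !inE eqxx xV.
rewrite finset.setU1K // eqxx andbT; congr andb.
apply/idP/idP => [/fintype.subsetP AxV|AV]; last by rewrite finset.subsetU // AV orbT.
apply/fintype.subsetP=> y yA; move: (AxV y yA); rewrite !inE.
by case: eqP => [yx|//]; move: xA; rewrite -yx yA.
Qed.

Lemma moebius_subset_inversion (R : pzRingType) (T : finType) (f : {set T} -> R)
    (W : {set T}) :
  \sum_(V : {set T} | V \subset W)
     \sum_(U : {set T} | U \subset V) (-1) ^+ (#|V| + #|U|) * f U = f W.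
Proof.
have inner (U : {set T}) : \sum_(V : {set T} | (V \subset W) && (U \subset V))
    (-1) ^+ (#|V| + #|U|) * f U = (U == W)%:R * f U.
  rewrite (eq_bigl (fun V : {set T} => (U \subset V) && (V \subset W))) => [|V];
    last by rewrite andbC.
  under eq_bigr do rewrite exprD -mulrA.
  by rewrite -big_distrl /= sum_sign_interval -mulrA signrMK.
rewrite (exchange_big_dep xpredT) //=; under eq_bigr do rewrite inner.
by rewrite (bigD1 W) //= eqxx mul1r big1 ?addr0 // => U /negbTE ->; rewrite mul0r.
Qed.

Lemma meval_dhomog_scale (n : nat) (R : comNzRingType) (d : nat) (p : mpoly n R)
    (c : R) (v : 'I_n -> R) :
  p \is ishomog1 d mdeg -> meval (fun i => c * v i) p = c ^+ d * meval v p.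
Proof.
move=> /dhomogP homp; rewrite !mevalE mulr_sumr; apply: eq_big_seq => m mp.
under eq_bigr do rewrite exprMn.
by rewrite big_split /= prodrXr -mdegE homp // mulrCA.
Qed.

Section CellMonomials.
Variable k : nat.

Definition cell_mnm (e : cell k -> nat) : multinom #|{: cell k}| :=
  Multinom [tuple e (enum_val j) | j < #|{: cell k}|].

Lemma cell_mnmE e j : cell_mnm e j = e (enum_val j).
Proof. exact: mnmE. Qed.

Lemma mdeg_cell_mnm e : mdeg (cell_mnm e) = (\sum_i e i)%N.
Proof.
by rewrite mdegE; under eq_bigr do rewrite cell_mnmE; rewrite -big_enum_val.
Qed.

Lemma evalc_cell_mnm (R : realType) e (y : {ffun cell k -> R}) :
  evalc (mpolyX R (cell_mnm e)) y = \prod_i y i ^+ e i.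
Proof.
rewrite /evalc mevalX.
transitivity (\prod_(j < #|{: cell k}|) y (enum_val j) ^+ e (enum_val j)).
  by apply: eq_bigr => j _; rewrite cell_mnmE.
by rewrite -(big_enum_val (fun i => y i ^+ e i)).
Qed.

End CellMonomials.

Lemma homogeneousP (R : realType) k (g : hpoly R k) :
  homogeneous g <-> exists d, g \is ishomog1 d mdeg.
Proof.
split=> [[d homg]|[d /dhomogP homg]]; exists d.
  by apply/dhomogP => m; rewrite mcoeff_msupp; apply: homg.
by move=> m; rewrite -mcoeff_msupp; apply: homg.
Qed.

Section Chart.
Variables (R : realType) (k : nat).
Implicit Types (x y : {ffun cell k -> R}) (g : hpoly R k).

Definition dehom x : {ffun cell k -> R} := [ffun i => x i / x (cell0 k)].

Lemma dehom0 x : x (cell0 k) != 0 -> dehom x (cell0 k) = 1.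
Proof. by move=> x0; rewrite ffunE divff. Qed.

Lemma evalc_dehom g d x : x (cell0 k) != 0 -> g \is ishomog1 d mdeg ->
  evalc g x = x (cell0 k) ^+ d * evalc g (dehom x).
Proof.
move=> x0 homg; rewrite -(meval_dhomog_scale _ _ homg) /evalc.
by apply: meval_eq => j; rewrite ffunE mulrC divfK.
Qed.

Lemma homogenized_binomial (a b : cell k -> nat) :
  exists d (g : hpoly R k), g \is ishomog1 d mdeg /\
    forall y, y (cell0 k) = 1 -> evalc g y =
      \prod_(i | i != cell0 k) y i ^+ a i - \prod_(i | i != cell0 k) y i ^+ b i.
Proof.
pose deg (e : cell k -> nat) := (\sum_(i | i != cell0 k) e i)%N.
(* the exponent of p_0 tops both monomials up to degree [maxn (deg a) (deg b)] *)
pose pad (e : cell k -> nat) c i : nat := if i == cell0 k then c else e i.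
have mdeg_pad e c : mdeg (cell_mnm (pad e c)) = (c + deg e)%N.
  rewrite mdeg_cell_mnm (bigD1 (cell0 k)) //= /pad eqxx; congr (_ + _)%N.
  by apply: eq_bigr => i /negbTE ->.
have eval_pad e c y : y (cell0 k) = 1 ->
    evalc (mpolyX R (cell_mnm (pad e c))) y = \prod_(i | i != cell0 k) y i ^+ e i.
  move=> y0; rewrite evalc_cell_mnm (bigD1 (cell0 k)) //= /pad eqxx y0 expr1n mul1r.
  by apply: eq_bigr => i /negbTE ->.
set ca := (deg b - deg a)%N; set cb := (deg a - deg b)%N.
exists (maxn (deg a) (deg b)),
  (mpolyX R (cell_mnm (pad a ca)) - mpolyX R (cell_mnm (pad b cb))).
split=> [|y y0]; last first.
  by rewrite -(eval_pad a ca) // -(eval_pad b cb) //; apply: mevalB.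
rewrite rpredB // !dhomogX /= !mdeg_pad; apply/eqP; lia.
Qed.

End Chart.

Lemma in_proj_closure_dehom (R : realType) k (Fasc : {set {set 'I_k}})
    (x : {ffun cell k -> R}) :
  (forall i, 0 < x i) -> in_proj_closure Fasc x <-> XA Fasc (dehom x).
Proof.
move=> xpos; have x0 : x (cell0 k) != 0 by rewrite gt_eqF.
split=> [xcl|Xx g /homogeneousP[d homg] gXA]; last first.
  by rewrite (evalc_dehom x0 homg) gXA ?dehom0 ?mulr0.
split=> [i _|dv dker]; first by rewrite ffunE divr_ge0 ?ltW.
have [d [g [homg gE]]] :=
  homogenized_binomial R (fun i => dplus (dv i)) (fun i => dminus (dv i)).
have : evalc g x = 0.
  apply: xcl => [|q q0 Xq]; first by apply/homogeneousP; exists d.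
  by rewrite gE // (Xq.2 dv dker) subrr.
rewrite (evalc_dehom x0 homg) gE ?dehom0 // => /eqP.
by rewrite mulf_eq0 expf_eq0 (negbTE x0) andbF subr_eq0 => /eqP.
Qed.

Lemma dplus_sub_dminus (R : pzRingType) (z : int) :
  (dplus z)%:R - (dminus z)%:R = z%:~R :> R.
Proof.
case: z => n; rewrite /dplus /dminus /=; last by rewrite NegzE sub0r.
have -> : Num.max (- (n%:Z)) 0 = 0 by apply/max_idPr; rewrite oppr_le0.
by rewrite subr0.
Qed.

Lemma prod_dplus_dminus_eq_iff (R : realType) (T : finType) (P : pred T)
    (y : T -> R) (d : T -> int) :
  (forall i, P i -> 0 < y i) ->
  \prod_(i | P i) y i ^+ dplus (d i) = \prod_(i | P i) y i ^+ dminus (d i) <->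
  \sum_(i | P i) (d i)%:~R * ln (y i) = 0.
Proof.
move=> ypos.
have prodE e : \prod_(i | P i) y i ^+ e i = expR (\sum_(i | P i) (e i)%:R * ln (y i)).
  rewrite expR_sum; apply: eq_bigr => i Pi.
  by rewrite mulr_natl -lnXn ?ypos // lnK // posrE exprn_gt0 ?ypos.
have -> : \sum_(i | P i) (d i)%:~R * ln (y i) =
    \sum_(i | P i) (dplus (d i))%:R * ln (y i) - \sum_(i | P i) (dminus (d i))%:R * ln (y i).
  by rewrite -sumrB; apply: eq_bigr => i _; rewrite -mulrBl dplus_sub_dminus.
rewrite !prodE; split=> [/expR_inj ->|/eqP]; first exact: subrr.
by rewrite subr_eq0 => /eqP ->.
Qed.

Lemma XA_ln_orthogonal (R : realType) k (Fasc : {set {set 'I_k}})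
    (y : {ffun cell k -> R}) :
  (forall i, i != cell0 k -> 0 < y i) ->
  XA Fasc y <-> forall d, in_kerA Fasc d ->
    \sum_(i | i != cell0 k) (d i)%:~R * ln (y i) = 0.
Proof.
move=> ypos; split=> [[_ Xy] d dker|orth]; first exact/(prod_dplus_dminus_eq_iff _ ypos)/Xy.
by split=> [i /ypos/ltW //|d dker]; apply/(prod_dplus_dminus_eq_iff _ ypos)/orth.
Qed.

Section CellsAsSets.
Variable k : nat.

Definition cell_of_set (U : {set 'I_k}) : cell k := [ffun j => j \in U].

Lemma phiK : cancel (@phi k) cell_of_set.
Proof. by move=> i; apply/ffunP => j; rewrite ffunE inE. Qed.

Lemma cell_of_setK : cancel cell_of_set (@phi k).
Proof. by move=> U; apply/finset.setP => j; rewrite inE ffunE. Qed.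

Lemma phi_cell0 : phi (cell0 k) = finset.set0.
Proof. by apply/finset.setP => j; rewrite !inE ffunE. Qed.

Lemma cell_of_set0 : cell_of_set finset.set0 = cell0 k.
Proof. by rewrite -[cell0 k]phiK phi_cell0. Qed.

Lemma sum_cell_of_set (M : nmodType) (F : cell k -> M) :
  \sum_(i | i != cell0 k) F i = \sum_(U : {set 'I_k} | U != finset.set0) F (cell_of_set U).
Proof.
rewrite (reindex cell_of_set); last by exists (@phi k) => ? _; rewrite ?phiK ?cell_of_setK.
by apply: eq_bigl => U; rewrite -cell_of_set0 (can_eq cell_of_setK).
Qed.

End CellsAsSets.

(* The Moebius function mu(U, V) of the Boolean lattice, cut off at U = set0 so
   that the coordinate at the zero cell vanishes. *)
Definition moebius_row k (V U : {set 'I_k}) : int :=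
  if (U != finset.set0) && (U \subset V) then (-1) ^+ (#|V| + #|U|) else 0.

Lemma moebius_row_in_kerA k (Fasc : {set {set 'I_k}}) V :
  V \in Fasc -> in_kerA Fasc [ffun i => moebius_row V (phi i)].
Proof.
move=> VF; split=> [|W]; first by rewrite ffunE phi_cell0 /moebius_row eqxx.
rewrite inE => /andP[WnF W0]; have WV : W != V by apply: contraNneq WnF => ->.
rewrite sum_cell_of_set.
transitivity (\sum_(U : {set 'I_k} | (W \subset U) && (U \subset V))
                (-1) ^+ (#|V| + #|U|) : int).
  rewrite big_mkcond [RHS]big_mkcond; apply: eq_bigr => U _.
  rewrite ffunE /designA /moebius_row !cell_of_setK.
  have [->|U0] /= := eqVneq U finset.set0; first by rewrite finset.subset0 (negbTE W0).
  by rewrite mulr_natl mulrb; case: (W \subset U).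
under eq_bigr do rewrite exprD.
by rewrite -big_distrr /= sum_sign_interval (negbTE WV) mul0r mulr0.
Qed.

Section LogLinear.
Variables (R : realType) (k : nat) (Fasc : {set {set 'I_k}}) (x : {ffun cell k -> R}).
Hypothesis xpos : forall i, 0 < x i.

Lemma dehom_gt0 i : 0 < dehom x i.
Proof. by rewrite ffunE divr_gt0. Qed.

Lemma ln_dehom i : ln (dehom x i) = ln (x i) - ln (x (cell0 k)).
Proof. by rewrite ffunE ln_div ?posrE. Qed.

Lemma loglinear_ln_orthogonal (beta : {set 'I_k} -> R) :
  (forall i, ln (x i) = \sum_(V : {set 'I_k} | V \subset phi i) beta V) ->
  (forall V, V \in Fasc -> beta V = 0) ->
  forall d, in_kerA Fasc d -> \sum_(i | i != cell0 k) (d i)%:~R * ln (dehom x i) = 0.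
Proof.
move=> lnxE beta0 d [_ dker].
have lnE i : ln (dehom x i) = \sum_(W in Fdes Fasc) (designA W i)%:~R * beta W.
  rewrite ln_dehom !lnxE phi_cell0 [X in _ - X](big_pred1 finset.set0) => [|V]; last first.
    by rewrite /= finset.subset0.
  rewrite (bigD1 finset.set0) ?finset.sub0set //= addrAC subrr add0r.
  rewrite big_mkcond [RHS]big_mkcond; apply: eq_bigr => W _; rewrite inE /designA.
  have [WF|WnF] /= := boolP (W \in Fasc); first by rewrite beta0 ?if_same.
  by case: (W \subset phi i); case: (W != finset.set0); rewrite /= ?mul1r ?mul0r.
under eq_bigr do rewrite lnE mulr_sumr.
rewrite exchange_big big1 //= => W WF.
transitivity ((\sum_(i : cell k | i != cell0 k) designA W i * d i)%:~R * beta W).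
  by rewrite rmorph_sum mulr_suml; apply: eq_bigr => i _; rewrite rmorphM mulrCA mulrA.
by rewrite dker // mul0r.
Qed.

Lemma ln_orthogonal_loglinear : finset.set0 \notin Fasc ->
  (forall d, in_kerA Fasc d -> \sum_(i | i != cell0 k) (d i)%:~R * ln (dehom x i) = 0) ->
  exists beta : {set 'I_k} -> R,
    (forall i, ln (x i) = \sum_(V : {set 'I_k} | V \subset phi i) beta V) /\
    (forall V, V \in Fasc -> beta V = 0).
Proof.
(* beta is the Moebius transform of ln x; for V in Fasc, pairing ln (x / x_0)
   with the kernel vector [moebius_row V] recovers beta V. *)
move=> F0 orth; pose f U := ln (x (cell_of_set U)).
exists (fun V : {set 'I_k} => \sum_(U : {set 'I_k} | U \subset V) (-1) ^+ (#|V| + #|U|) * f U).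
split=> [i|V VF]; first by rewrite moebius_subset_inversion /f phiK.
have V0 : V != finset.set0 by apply: contraNneq F0 => <-.
pose g U := ln (dehom x (cell_of_set U)).
have -> : \sum_(U : {set 'I_k} | U \subset V) (-1) ^+ (#|V| + #|U|) * f U =
          \sum_(U : {set 'I_k} | U \subset V) (-1) ^+ (#|V| + #|U|) * g U.
  apply/eqP; rewrite -subr_eq0 -sumrB.
  under eq_bigr do rewrite -mulrBr /g ln_dehom opprB addrC subrK exprD -mulrA.
  rewrite -big_distrr -big_distrl /=.
  rewrite (eq_bigl (fun U : {set 'I_k} => (finset.set0 \subset U) && (U \subset V))) => [|U].
    by rewrite sum_sign_interval (eq_sym finset.set0) (negbTE V0) !mul0r mulr0.
  by rewrite finset.sub0set.
rewrite -[RHS](orth _ (moebius_row_in_kerA VF)) sum_cell_of_set big_mkcond [RHS]big_mkcond.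
apply: eq_bigr => U _; rewrite ffunE cell_of_setK /moebius_row.
have [->|U0] /= := eqVneq U finset.set0.
  by rewrite /g cell_of_set0 dehom0 ?ln1 ?mulr0 ?if_same // gt_eqF.
by case: (U \subset V); rewrite ?mul0r // intr_sign.
Qed.

End LogLinear.

Lemma closure_int_simplex_LL (R : realType) k (Fasc : {set {set 'I_k}})
    (x : {ffun cell k -> R}) :
  finset.set0 \notin Fasc -> closure_int_simplex Fasc x <-> LL Fasc x.
Proof.
move=> F0; split=> [[xcl xs]|[xs [beta [lnxE beta0]]]]; split=> //; have xpos := xs.1.
  apply: ln_orthogonal_loglinear => //.
  exact/(XA_ln_orthogonal _ (fun i _ => dehom_gt0 xpos i))/(in_proj_closure_dehom _ xpos).
apply/(in_proj_closure_dehom _ xpos)/(XA_ln_orthogonal _ (fun i _ => dehom_gt0 xpos i)).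
exact: loglinear_ln_orthogonal lnxE beta0.
Qed.

Lemma eq_homeomorphic (R : realType) (C : finType) (A B : {ffun C -> R} -> Prop) :
  (forall x, A x <-> B x) -> homeomorphic A B.
Proof.
move=> AB; exists id, id.
have cont (P : {ffun C -> R} -> Prop) : continuous_on P id.
  by move=> x _ e e0; exists e => // y _ xy; apply: xy.
split; first by move=> x /AB.
split; first by move=> x /AB.
by do ![split | exact: cont].
Qed.

Theorem theorem6 (R : realType) (k : nat) (Fasc : {set {set 'I_k}}) :
  ascending Fasc -> finset.set0 \notin Fasc ->
  homeomorphic (closure_int_simplex (R := R) Fasc) (LL (R := R) Fasc).
Proof. by move=> _ F0; apply: eq_homeomorphic => x; apply: closure_int_simplex_LL. Qed.
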